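(* Let $G=(V,A)$ be an acyclic digraph. Then $|A| \le \sqrt{2\, p_{\#}(G)}\,|V|$, where $p_{\#}(G) = \frac{1}{2}\sum_{u\in V} |d^+(u)-d^-(u)|$.
   Context: Digraphs are simple. A digraph is acyclic if it contains no directed cycle. For a vertex $u$, $d^+(u)$ and $d^-(u)$ denote its outdegree and indegree. *)

From mathcomp Require Import all_boot all_order all_algebra.
Set Implicit Arguments. Unset Strict Implicit. Unset Printing Implicit Defensive.
Import Order.TTheory GRing.Theory Num.Theory.

(* A simple digraph on a finite vertex type T is an irreflexive relation
   e : rel T (e u v means there is an arc u -> v). *)
Definition loopless (T : finType) (e : rel T) : Prop := forall x, ~~ e x x.

Definition arcs (T : finType) (e : rel T) : {set T * T} :=
  [set a | e a.1 a.2].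

Definition outdeg (T : finType) (e : rel T) (u : T) : nat := #|[set v | e u v]|.
Definition indeg (T : finType) (e : rel T) (u : T) : nat := #|[set v | e v u]|.

Definition acyclic (T : finType) (e : rel T) : Prop :=
  forall x y, e x y -> ~~ connect e y x.

Local Open Scope ring_scope.

Definition pimb (R : realFieldType) (T : finType) (e : rel T) : R :=
  2^-1 * \sum_(u : T) `|(outdeg e u)%:R - (indeg e u)%:R : R|.

(* Number the vertices 0, ..., n - 1 along a topological order h and call
   h v - h u >= 1 the span of the arc uv. An arc of span k is determined by its
   tail, so at most n arcs have span k, at most L n arcs have span <= L, and
   |A|^2 <= 2 n S where S is the total span. Now S telescopes to
   sum_u h u (d^-(u) - d^+(u)); as sum_u (d^-(u) - d^+(u)) = 0 we may shift h by
   (n - 1) / 2, which gives 2 S <= (n - 1) sum_u |d^+(u) - d^-(u)| = 2 (n - 1) p_#(G).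
   Hence |A|^2 <= 2 p_#(G) n (n - 1). *)

From mathcomp Require Import all_boot all_order all_algebra zify lra.
Import Order.TTheory GRing.Theory Num.Theory.

Set Implicit Arguments.
Unset Strict Implicit.
Unset Printing Implicit Defensive.

Section LengthCounting.
Variables (I : finType) (A : {pred I}) (l : I -> nat) (n : nat).
Hypothesis l_gt0 : forall a, a \in A -> 0 < l a.
Hypothesis card_level_le : forall k, #|[pred a in A | l a == k]| <= n.

Lemma card_sublevel_le L : #|[pred a in A | l a <= L]| <= L * n.
Proof.
elim: L => [|L IHL].
  rewrite mul0n leqn0; apply/eqP/eq_card0 => a; rewrite !inE leqn0 eqn0Ngt.
  by case: (boolP (a \in A)) => //= /l_gt0 ->.
rewrite -(cardID (fun a => l a <= L)) mulSn addnC leq_add //.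
  apply: leq_trans (card_level_le L.+1); apply: subset_leq_card; apply/subsetP => a /=.
  by rewrite !inE => /and3P[gt_aL A_a le_aL]; rewrite A_a eqn_leq le_aL ltnNge.
apply: leq_trans IHL; apply: subset_leq_card; apply/subsetP => a.
by rewrite !inE => /andP[/andP[A_a _] le_aL]; rewrite A_a.
Qed.

Lemma sum_sublevel_card a :
  \sum_(b in A) (l b <= l a : nat) = #|[pred b in A | l b <= l a]|.
Proof. by rewrite -big_mkcondr sum1dep_card cardsE. Qed.

Lemma card_sq_le_sum : #|A| ^ 2 <= 2 * n * \sum_(a in A) l a.
Proof.
have cmp_ge1 a b : 1 <= (l b <= l a : nat) + (l a <= l b : nat).
  by case: (leqP (l b) (l a)) => [|/ltnW ->]; rewrite ?addn1.
apply: (@leq_trans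
  (\sum_(a in A) \sum_(b in A) ((l b <= l a : nat) + (l a <= l b : nat)))).
  rewrite expnS expn1 -{1}(sum1_card A) big_distrl /=; apply: leq_sum => a _.
  by rewrite mul1n -(sum1_card A); apply: leq_sum => b _; apply: cmp_ge1.
rewrite (eq_bigr _ (fun a _ => big_split _ _ _ _ _)) big_split /= [X in _ + X]exchange_big.
rewrite addnn -mul2n -mulnA leq_mul2l big_distrr /=.
by apply: leq_sum => a _; rewrite sum_sublevel_card mulnC card_sublevel_le.
Qed.

End LengthCounting.

Lemma exists_rank_of_key (T : finType) (f : T -> nat) :
  exists h : T -> nat,
    [/\ injective h, forall u, h u < #|T| & forall u v, f u < f v -> h u < h v].
Proof.
pose s := sort (relpre f leq) (enum T).
have mem_s u : u \in s by rewrite mem_sort mem_enum.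
have size_s : size s = #|T| by rewrite size_sort cardE.
have s_sorted : sorted (relpre f leq) s.
  by apply: sort_sorted => u v; apply: leq_total.
have f_trans : transitive (relpre f leq).
  by move=> v u w; apply: leq_trans.
exists (index^~ s); split.
- by move=> u v eq_uv; rewrite -(nth_index u (mem_s u)) eq_uv nth_index.
- by move=> u; rewrite -size_s index_mem.
- move=> u v lt_fuv; rewrite ltnNge; apply/negP.
  move/(sorted_leq_index f_trans (fun w => leqnn (f w)) s_sorted).
  move/(_ (mem_s v) (mem_s u)).
  by rewrite /= leqNgt lt_fuv.
Qed.

Lemma acyclic_card_ancestors_lt (T : finType) (e : rel T) : acyclic e ->
  forall u v, e u v -> #|[set w | connect e w u]| < #|[set w | connect e w v]|.
Proof.
move=> acyc u v euv; apply: proper_card; apply/properP; split.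
  by apply/subsetP => w; rewrite !inE => /connect_trans; apply; apply: connect1.
by exists v; rewrite !inE ?connect0 // (negbTE (acyc _ _ euv)).
Qed.

Lemma acyclic_topological_rank (T : finType) (e : rel T) : acyclic e ->
  exists h : T -> nat,
    [/\ injective h, forall u, h u < #|T| & forall u v, e u v -> h u < h v].
Proof.
move=> acyc; have [h [h_inj h_lt h_mono]] :=
  exists_rank_of_key (fun u => #|[set w | connect e w u]|).
by exists h; split=> // u v /(acyclic_card_ancestors_lt acyc) /h_mono.
Qed.

Lemma card_arcs_of_span (T : finType) (e : rel T) (h : T -> nat) k :
  injective h -> (forall u v, e u v -> h u < h v) ->
  #|[pred a in arcs e | h a.2 - h a.1 == k]| <= #|T|.
Proof.
move=> h_inj h_mono; apply: (@leq_card_in _ _ fst) => -[u v] [u' v'].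
rewrite !inE /= => /andP[/h_mono lt_uv /eqP span_uv].
move=> /andP[/h_mono lt_uv' /eqP span_uv'] eq_u.
by rewrite -{}eq_u in lt_uv' span_uv' *; congr (_, _); apply: h_inj; lia.
Qed.

Local Open Scope ring_scope.

Lemma sum_arcs_tail (T : finType) (e : rel T) (V : nmodType) (F : T -> V) :
  \sum_(a in arcs e) F a.1 = \sum_u F u *+ outdeg e u.
Proof.
rewrite (eq_bigl (fun a => e a.1 a.2)) => [|a]; last by rewrite inE.
rewrite -(pair_big_dep xpredT e (fun u _ => F u)); apply: eq_bigr => u _.
by rewrite sumr_const; congr (_ *+ _); apply: eq_card => v; rewrite inE.
Qed.

Lemma sum_arcs_head (T : finType) (e : rel T) (V : nmodType) (F : T -> V) :
  \sum_(a in arcs e) F a.2 = \sum_u F u *+ indeg e u.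
Proof.
rewrite -(sum_arcs_tail (fun u v => e v u)) (reindex_inj (can_inj (@swap_pairK T T))).
by apply: eq_bigl => a; rewrite !inE.
Qed.

Lemma sum_arcs_sub (T : finType) (e : rel T) (V : zmodType) (g : T -> V) :
  \sum_(a in arcs e) (g a.2 - g a.1) = \sum_u (g u *+ indeg e u - g u *+ outdeg e u).
Proof. by rewrite sumrB sum_arcs_head sum_arcs_tail -sumrB. Qed.

Lemma sum_indeg_sub_outdeg (T : finType) (e : rel T) (V : zmodType) (c : V) :
  \sum_u (c *+ indeg e u - c *+ outdeg e u) = 0.
Proof. by rewrite -(sum_arcs_sub e (fun=> c)) big1 // => a _; rewrite subrr. Qed.

Lemma sum_arcs_sub_le (T : finType) (e : rel T) (R : realDomainType)
    (g : T -> R) (c : R) :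
  (forall u, 0 <= g u <= c) ->
  2 * \sum_(a in arcs e) (g a.2 - g a.1) <=
  c * \sum_u `|(outdeg e u)%:R - (indeg e u)%:R|.
Proof.
move=> g_bounded.
have sum_centre : \sum_u c * ((indeg e u)%:R - (outdeg e u)%:R) = 0.
  rewrite -[RHS](sum_indeg_sub_outdeg e c).
  by apply: eq_bigr => u _; rewrite mulrBr !mulr_natr.
have -> : 2 * \sum_(a in arcs e) (g a.2 - g a.1) =
    \sum_u (2 * g u - c) * ((indeg e u)%:R - (outdeg e u)%:R).
  under [RHS]eq_bigr do rewrite mulrBl.
  rewrite [RHS]sumrB sum_centre subr0 sum_arcs_sub mulr_sumr.
  by apply: eq_bigr => u _; rewrite -mulrA [g u * _]mulrBr !mulr_natr.
rewrite mulr_sumr; apply: ler_sum => u _.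
rewrite (le_trans (ler_norm _)) // normrM [`|(indeg e u)%:R - _|]distrC ler_wpM2r //.
by have /andP[g_ge0 g_le] := g_bounded u; rewrite ler_norml; apply/andP; split; lra.
Qed.

Lemma mul2_pimb (R : realFieldType) (T : finType) (e : rel T) :
  2 * pimb R e = \sum_u `|(outdeg e u)%:R - (indeg e u)%:R|.
Proof. by rewrite /pimb mulrA divff ?mul1r ?pnatr_eq0. Qed.

Lemma ler_sqrt_mul_of_sqr (R : rcfType) (x y z : R) :
  0 <= x -> 0 <= z -> x ^+ 2 <= y * z ^+ 2 -> x <= Num.sqrt y * z.
Proof.
move=> x_ge0 z_ge0 le_xyz.
rewrite -(ger0_norm x_ge0) -(ger0_norm z_ge0) -!sqrtr_sqr mulrC -sqrtrM ?sqr_ge0 //.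
by apply: ler_wsqrtr; rewrite mulrC.
Qed.

Theorem proposition1p2 (R : rcfType) (T : finType) (e : rel T) :
  loopless e -> acyclic e ->
  (#|arcs e|)%:R <= Num.sqrt (2 * pimb R e) * (#|T|)%:R :> R.
Proof.
(* acyclicity already excludes loops *)
move=> _ acyc; have [h [h_inj h_lt h_mono]] := acyclic_topological_rank acyc.
set n := #|T|; pose span a := (h a.2 - h a.1)%N.
have sq_le : (#|arcs e| ^ 2 <= 2 * n * \sum_(a in arcs e) span a)%N.
  apply: card_sq_le_sum => [a|k]; last exact: card_arcs_of_span.
  by rewrite inE subn_gt0 => /h_mono.
have span_sum : (\sum_(a in arcs e) span a)%:R =
    \sum_(a in arcs e) ((h a.2)%:R - (h a.1)%:R) :> R.
  by rewrite natr_sum; apply: eq_bigr => a; rewrite inE => /h_mono/ltnW/natrB.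
have potential_le : 2 * \sum_(a in arcs e) ((h a.2)%:R - (h a.1)%:R) <=
    n.-1%:R * (2 * pimb R e) :> R.
  rewrite mul2_pimb; apply: (@sum_arcs_sub_le _ e R (fun u => (h u)%:R)) => u.
  by rewrite ler0n ler_nat; have := h_lt u; lia.
have pimb_ge0 : 0 <= 2 * pimb R e by rewrite mul2_pimb sumr_ge0.
apply: ler_sqrt_mul_of_sqr => //.
apply: (@le_trans _ _ (n%:R * (n.-1%:R * (2 * pimb R e)))).
  apply: (@le_trans _ _ (2 * n * \sum_(a in arcs e) span a)%:R).
    by rewrite -natrX ler_nat.
  by rewrite mulnAC natrM mulrC natrM span_sum ler_wpM2l.
rewrite [X in _ <= X]mulrC expr2 -mulrA ler_wpM2l // ler_wpM2r //.
by rewrite ler_nat leq_pred.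
Qed.
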